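(* Let $k\geq3$ be an integer and let $0\leq a<\frac1k$ and $\frac{k-1}{k}<b\leq 1$. Then: (a) $\mathcal{W}_k(a,b)\subseteq C_k$; (b) $g_k^{-1}\big(\mathcal{W}_2(g_k(a),g_k(b))\big)\cap B_k=\emptyset$; (c) $\mathcal{W}_k(a,b)=C_k\cap g_k^{-1}\big(\mathcal{W}_2(g_k(a),g_k(b))\big)$.
   Context: For an integer $m\geq2$, $T_m:[0,1)\to[0,1)$ is $T_m(x)=mx\bmod1$, and for $0\leq c<e\leq1$, $\mathcal{W}_m(c,e)=\{x\in[0,1)\ :\ T_m^n(x)\notin(c,e)\ \forall n\geq0\}$. $B_k=\{\ell/k^n\ :\ n\geq1,\ 1\leq\ell\leq k^n-1\}$. $C_k$ is the set of $x\in[0,1]$ admitting an expansion $x=\sum_{n\geq1}a_nk^{-n}$ with all $a_n\in\{0,k-1\}$. The function $g_k:[0,1]\to[0,1]$ is defined as follows: write $x=\sum_{n\geq1}a_nk^{-n}$ with $a_n\in\{0,1,\dots,k-1\}$; if $N\geq1$ is the least index with $a_N\notin\{0,k-1\}$, set $g_k(x)=\sum_{n=1}^{N-1}\frac{a_n}{(k-1)2^n}+\frac{1}{2^N}$; if all $a_n\in\{0,k-1\}$, set $g_k(x)=\sum_{n\geq1}\frac{a_n}{(k-1)2^n}$ (independent of the choice of expansion). Preimages $g_k^{-1}$ are taken in $[0,1]$. *)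

From Stdlib Require Import Reals Lra Lia ClassicalEpsilon.
Open Scope R_scope.

Definition T (m : nat) (x : R) : R := frac_part (INR m * x).

Definition Wset (m : nat) (c e : R) (x : R) : Prop :=
  0 <= x < 1 /\ forall n : nat, ~ (c < Nat.iter n (T m) x < e).

Definition Bset (k : nat) (x : R) : Prop :=
  exists n l : nat, (1 <= n)%nat /\ (1 <= l)%nat /\ (l <= k ^ n - 1)%nat /\
    x = INR l / INR k ^ n.

(* a : nat -> nat is a base-k expansion of x: digits a 1, a 2, ... in {0..k-1}
   (a 0 is ignored) and x = sum_{n>=1} a_n k^{-n}. *)
Definition is_expansion (k : nat) (a : nat -> nat) (x : R) : Prop :=
  (forall n, (1 <= n)%nat -> (a n < k)%nat) /\
  infinite_sum (fun i => INR (a (S i)) / INR k ^ (S i)) x.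

Definition extreme_digit (k d : nat) : Prop := d = 0%nat \/ d = (k - 1)%nat.

Definition Cset (k : nat) (x : R) : Prop :=
  0 <= x <= 1 /\
  exists a, is_expansion k a x /\ forall n, (1 <= n)%nat -> extreme_digit k (a n).

Fixpoint psum (f : nat -> R) (n : nat) : R :=
  match n with O => 0 | S p => psum f p + f (S p) end.

Definition g_val (k : nat) (a : nat -> nat) (y : R) : Prop :=
  (exists N : nat, (1 <= N)%nat /\ ~ extreme_digit k (a N) /\
     (forall n, (1 <= n < N)%nat -> extreme_digit k (a n)) /\
     y = psum (fun n => INR (a n) / (INR (k - 1) * 2 ^ n)) (N - 1) + / 2 ^ N)
  \/
  ((forall n, (1 <= n)%nat -> extreme_digit k (a n)) /\
   infinite_sum (fun i => INR (a (S i)) / (INR (k - 1) * 2 ^ (S i))) y).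

(* g_k x: the value given by (any) expansion of x in [0,1]; the paper asserts
   independence of the expansion. Outside [0,1] the value is irrelevant. *)
Definition g (k : nat) (x : R) : R :=
  epsilon (inhabits 0) (fun y => exists a, is_expansion k a x /\ g_val k a y).

(* Every orbit point of x in W_k(a,b) lies in [0,a] or [b,1), and since a < 1/k and
   b > (k-1)/k the greedy base-k digits of x are all 0 or k-1: this is (a).  On such
   expansions g_k just relabels the digits 0, k-1 as binary 0, 1, so it intertwines T_k
   and T_2 along orbits; and g_k is nondecreasing on [0,1], strictly so except where it is
   constant on a gap of C_k, where its value is dyadic.  Since g_k(a) < 1/2 < g_k(b) and
   the T_2-orbit of a dyadic point of (0,1) passes through 1/2, no orbit point of an
   element of W_2(g_k a, g_k b) is a dyadic point of (0,1); so monotonicity moves the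
   condition "avoid (a,b)" to "avoid (g_k a, g_k b)" and back, which is (c).  For (b), a
   k-adic rational x in (0,1) either has a non-extreme digit, and then g_k(x) is dyadic,
   or lies in C_k and hence in W_k(a,b) by (c), although its T_k-orbit meets some
   d/k in (a,b). *)

From Stdlib Require Import Reals Lra Lia ClassicalEpsilon Classical Wf_nat.
Open Scope R_scope.

Definition digits (B : nat) (f : nat -> nat) : Prop :=
  forall n, (1 <= n)%nat -> (f n < B)%nat.

Definition prefix_value (B : nat) (f : nat -> nat) (n : nat) : R :=
  psum (fun i => INR (f i) / INR B ^ i) n.

Definition remainder (B : nat) (f : nat -> nat) (x : R) (n : nat) : R :=
  INR B ^ n * (x - prefix_value B f n).

Definition shift (f : nat -> nat) (n : nat) : nat -> nat := fun i => f (i + n)%nat.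

Definition adic (B : nat) (z : R) : Prop := exists m j : nat, z = INR m / INR B ^ j.

Definition greedy (B : nat) (x : R) (n : nat) : nat :=
  match n with
  | O => 0
  | S m => Z.to_nat (Int_part (INR B * Nat.iter m (T B) x))
  end.

Lemma first_failure (P : nat -> Prop) :
  ~ (forall i, (1 <= i)%nat -> P i) ->
  exists n, (forall i, (1 <= i <= n)%nat -> P i) /\ ~ P (S n).
Proof.
  intro Hnot.
  destruct (dec_inh_nat_subset_has_unique_least_element (fun n => ~ P (S n)))
    as [n [[HPn Hleast] _]].
  - intro n; apply classic.
  - apply NNPP; intro Hall; apply Hnot; intros [|i] Hi; [lia|].
    apply NNPP; intro HPi; apply Hall; now exists i.
  - exists n; split; [|exact HPn].
    intros [|i] Hi; [lia|]. apply NNPP; intro HPi. specialize (Hleast i HPi). lia.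
Qed.

Lemma frac_part_plus_INR (y : R) (m : nat) : 0 <= y < 1 -> frac_part (y + INR m) = y.
Proof.
  intro Hy. symmetry.
  apply (Int_part_frac_part_spec _ (Z.of_nat m)); [exact Hy|].
  rewrite <- INR_IZR_INZ. ring.
Qed.

Lemma infinite_sum_between (s : nat -> R) (l lo hi : R) (N : nat) :
  infinite_sum s l -> (forall n, (N <= n)%nat -> lo <= sum_f_R0 s n <= hi) -> lo <= l <= hi.
Proof.
  intros Hs Hb. split; apply Rnot_lt_le; intro Hlt.
  - destruct (Hs (lo - l)) as [K HK]; [lra|].
    specialize (HK (max K N) (Nat.le_max_l _ _)). specialize (Hb (max K N) (Nat.le_max_r _ _)).
    unfold Rdist in HK. apply Rabs_def2 in HK. lra.
  - destruct (Hs (l - hi)) as [K HK]; [lra|].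
    specialize (HK (max K N) (Nat.le_max_l _ _)). specialize (Hb (max K N) (Nat.le_max_r _ _)).
    unfold Rdist in HK. apply Rabs_def2 in HK. lra.
Qed.

Lemma prefix_value_S (B : nat) (f : nat -> nat) (n : nat) :
  prefix_value B f (S n) = prefix_value B f n + INR (f (S n)) / INR B ^ S n.
Proof. reflexivity. Qed.

Lemma prefix_value_ext (B : nat) (f h : nat -> nat) (n : nat) :
  (forall i, (1 <= i <= n)%nat -> f i = h i) -> prefix_value B f n = prefix_value B h n.
Proof.
  induction n as [|n IH]; intro Hfh; [reflexivity|].
  rewrite !prefix_value_S, IH by (intros; apply Hfh; lia).
  rewrite Hfh by lia. reflexivity.
Qed.

Section Expansions.

Variable B : nat.
Hypothesis HB : (2 <= B)%nat.

Lemma INR_base_gt_1 : 1 < INR B.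
Proof. apply lt_1_INR. lia. Qed.

Lemma pow_base_pos (n : nat) : 0 < INR B ^ n.
Proof. apply pow_lt. pose proof INR_base_gt_1. lra. Qed.

Lemma inv_pow_base_pos (n : nat) : 0 < / INR B ^ n.
Proof. apply Rinv_0_lt_compat, pow_base_pos. Qed.

Lemma digit_le (d : nat) : (d < B)%nat -> INR d <= INR B - 1.
Proof. intro Hd. apply le_INR in Hd. rewrite S_INR in Hd. lra. Qed.

Lemma prefix_value_le (f : nat -> nat) (n m : nat) : digits B f -> (n <= m)%nat ->
  prefix_value B f n <= prefix_value B f m <=
  prefix_value B f n + / INR B ^ n - / INR B ^ m.
Proof.
  intros Hf Hnm. induction Hnm as [|m Hnm IH]; [lra|].
  rewrite prefix_value_S.
  assert (Hd := digit_le _ (Hf (S m) ltac:(lia))). assert (Hpos := pos_INR (f (S m))).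
  assert (Hp := pow_base_pos m). assert (Hr := INR_base_gt_1).
  assert (E : / INR B ^ m - / INR B ^ S m = (INR B - 1) / INR B ^ S m)
    by (simpl; field; lra).
  assert (0 <= INR (f (S m)) / INR B ^ S m <= (INR B - 1) / INR B ^ S m).
  { pose proof (inv_pow_base_pos (S m)). unfold Rdiv.
    split; [apply Rmult_le_pos|apply Rmult_le_compat_r]; lra. }
  lra.
Qed.

Lemma prefix_value_adic (f : nat -> nat) (n : nat) :
  exists m, prefix_value B f n = INR m / INR B ^ n.
Proof.
  induction n as [|n [m Hm]].
  - exists 0%nat. cbn. field.
  - exists (m * B + f (S n))%nat.
    rewrite prefix_value_S, Hm, plus_INR, mult_INR.
    pose proof (pow_base_pos n). pose proof INR_base_gt_1. simpl. field. lra.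
Qed.

Lemma remainder_0 (f : nat -> nat) (x : R) : remainder B f x 0 = x.
Proof. unfold remainder. cbn. ring. Qed.

Lemma remainder_S (f : nat -> nat) (x : R) (n : nat) :
  remainder B f x (S n) = INR B * remainder B f x n - INR (f (S n)).
Proof.
  unfold remainder. rewrite prefix_value_S.
  pose proof (pow_base_pos n). pose proof INR_base_gt_1. simpl. field. lra.
Qed.

Lemma remainder_split (f : nat -> nat) (x : R) (n : nat) :
  x = prefix_value B f n + remainder B f x n / INR B ^ n.
Proof. unfold remainder. pose proof (pow_base_pos n). field. lra. Qed.

Lemma sum_f_R0_prefix_value (f : nat -> nat) (n : nat) :
  sum_f_R0 (fun i => INR (f (S i)) / INR B ^ S i) n = prefix_value B f (S n).
Proof.
  induction n as [|n IH]; [cbn; ring|].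
  rewrite tech5, IH. reflexivity.
Qed.

Lemma inv_pow_base_small (eps : R) : 0 < eps ->
  exists K, forall n, (K <= n)%nat -> / INR B ^ n < eps.
Proof.
  intro Heps. pose proof INR_base_gt_1.
  destruct (pow_lt_1_zero (/ INR B)) with (y := eps) as [K HK]; [|exact Heps|].
  - rewrite Rabs_right by (apply Rle_ge, Rlt_le, Rinv_0_lt_compat; lra).
    rewrite <- Rinv_1. apply Rinv_lt_contravar; lra.
  - exists K. intros n Hn. specialize (HK n Hn).
    rewrite pow_inv, Rabs_right in HK by apply Rle_ge, Rlt_le, inv_pow_base_pos. exact HK.
Qed.

Lemma is_expansion_iff (f : nat -> nat) (x : R) :
  is_expansion B f x <-> digits B f /\ forall n, 0 <= remainder B f x n <= 1.
Proof.
  assert (Hrem : forall n, 0 <= remainder B f x n <= 1 <->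
            prefix_value B f n <= x <= prefix_value B f n + / INR B ^ n).
  { intro n. unfold remainder. pose proof (pow_base_pos n).
    assert (Hinv : INR B ^ n * / INR B ^ n = 1) by (field; lra).
    pose proof (inv_pow_base_pos n). split; intros [H1 H2]; split; nra. }
  split; intros [Hf Hx]; split; try exact Hf.
  - intro n. apply Hrem. apply (infinite_sum_between _ _ _ _ n Hx). intros m Hm.
    rewrite sum_f_R0_prefix_value.
    pose proof (prefix_value_le f n (S m) Hf ltac:(lia)). pose proof (inv_pow_base_pos (S m)).
    lra.
  - intros eps Heps. destruct (inv_pow_base_small eps Heps) as [K HK].
    exists K. intros m Hm. rewrite sum_f_R0_prefix_value. unfold Rdist.
    specialize (HK (S m) ltac:(lia)). pose proof (proj1 (Hrem (S m)) (Hx (S m))).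
    apply Rabs_def1; lra.
Qed.

Lemma remainder_bounds (f : nat -> nat) (x : R) (n : nat) :
  is_expansion B f x -> 0 <= remainder B f x n <= 1.
Proof. intro Hx. exact (proj2 (proj1 (is_expansion_iff f x) Hx) n). Qed.

Lemma is_expansion_range (f : nat -> nat) (x : R) : is_expansion B f x -> 0 <= x <= 1.
Proof. intro Hx. rewrite <- (remainder_0 f x). now apply remainder_bounds. Qed.

Lemma is_expansion_unique (f : nat -> nat) (x y : R) :
  is_expansion B f x -> is_expansion B f y -> x = y.
Proof. intros [_ Hx] [_ Hy]. exact (uniqueness_sum _ _ _ Hx Hy). Qed.

Lemma is_expansion_ext (f h : nat -> nat) (x : R) :
  (forall i, (1 <= i)%nat -> f i = h i) -> is_expansion B f x -> is_expansion B h x.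
Proof.
  intros Hfh Hx. apply is_expansion_iff in Hx as [Hf Hx]. apply is_expansion_iff. split.
  - intros i Hi. rewrite <- Hfh by exact Hi. now apply Hf.
  - intro n. unfold remainder. rewrite <- (prefix_value_ext B f h n) by (intros; apply Hfh; lia).
    apply Hx.
Qed.

Lemma is_expansion_exists (f : nat -> nat) : digits B f -> exists x, is_expansion B f x.
Proof.
  intro Hf.
  destruct (growing_cv (sum_f_R0 (fun i => INR (f (S i)) / INR B ^ S i))) as [x Hx].
  - intro m. rewrite !sum_f_R0_prefix_value. apply (prefix_value_le f (S m) (S (S m)) Hf). lia.
  - exists 1. intros y [m ->]. rewrite sum_f_R0_prefix_value.
    pose proof (prefix_value_le f 0 (S m) Hf ltac:(lia)). pose proof (inv_pow_base_pos (S m)).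
    cbn in *. lra.
  - exists x. split; assumption.
Qed.

Lemma prefix_value_shift (f : nat -> nat) (n m : nat) :
  prefix_value B (shift f n) m = INR B ^ n * (prefix_value B f (n + m) - prefix_value B f n).
Proof.
  induction m as [|m IH].
  - rewrite Nat.add_0_r. cbn. ring.
  - rewrite Nat.add_succ_r, !prefix_value_S, IH. unfold shift.
    replace (S m + n)%nat with (S (n + m)) by lia. rewrite <- Nat.add_succ_r, pow_add.
    pose proof (pow_base_pos n). pose proof (pow_base_pos (S m)). field. lra.
Qed.

Lemma remainder_shift (f : nat -> nat) (x : R) (n m : nat) :
  remainder B (shift f n) (remainder B f x n) m = remainder B f x (n + m).
Proof.
  unfold remainder at 1 3. rewrite prefix_value_shift. unfold remainder.
  rewrite pow_add. ring.
Qed.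

Lemma is_expansion_shift (f : nat -> nat) (x : R) (n : nat) :
  is_expansion B f x -> is_expansion B (shift f n) (remainder B f x n).
Proof.
  intro Hx. apply is_expansion_iff in Hx as [Hf Hx]. apply is_expansion_iff. split.
  - intros i Hi. apply Hf. lia.
  - intro m. rewrite remainder_shift. apply Hx.
Qed.

Lemma is_expansion_eventually_zero (f : nat -> nat) (N : nat) :
  digits B f -> (forall i, (N < i)%nat -> f i = 0%nat) ->
  is_expansion B f (prefix_value B f N).
Proof.
  intros Hf Hz. apply is_expansion_iff. split; [exact Hf|]. intro n. unfold remainder.
  destruct (Nat.le_gt_cases n N) as [HnN|HNn].
  - pose proof (prefix_value_le f n N Hf HnN). pose proof (inv_pow_base_pos N).
    pose proof (pow_base_pos n).
    assert (Hinv : INR B ^ n * / INR B ^ n = 1) by (field; lra).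
    split; nra.
  - assert (E : prefix_value B f n = prefix_value B f N).
    { induction HNn as [|n Hn IH]; rewrite prefix_value_S, Hz by lia.
      all: cbn [INR]; unfold Rdiv; rewrite Rmult_0_l, Rplus_0_r; auto. }
    rewrite E, Rminus_diag, Rmult_0_r. lra.
Qed.

Lemma is_expansion_eventually_max (f : nat -> nat) (N : nat) :
  digits B f -> (forall i, (N < i)%nat -> f i = (B - 1)%nat) ->
  is_expansion B f (prefix_value B f N + / INR B ^ N).
Proof.
  intros Hf Hmax. apply is_expansion_iff. split; [exact Hf|]. intro n. unfold remainder.
  pose proof INR_base_gt_1.
  destruct (Nat.le_gt_cases n N) as [HnN|HNn].
  - pose proof (prefix_value_le f n N Hf HnN). pose proof (inv_pow_base_pos N).
    pose proof (pow_base_pos n).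
    assert (Hinv : INR B ^ n * / INR B ^ n = 1) by (field; lra).
    split; nra.
  - assert (E : prefix_value B f n = prefix_value B f N + / INR B ^ N - / INR B ^ n).
    { induction HNn as [|n Hn IH].
      - rewrite prefix_value_S, Hmax, minus_INR by lia. cbn [INR pow].
        pose proof (pow_base_pos N). field. split; lra.
      - rewrite prefix_value_S, IH, Hmax, minus_INR by lia. cbn [INR pow].
        pose proof (pow_base_pos n). pose proof (pow_base_pos N). field. repeat split; lra. }
    pose proof (pow_base_pos n). pose proof (pow_base_pos N).
    replace (INR B ^ n * (prefix_value B f N + / INR B ^ N - prefix_value B f n)) with 1
      by (rewrite E; field; repeat split; lra).
    lra.
Qed.

Lemma is_expansion_all_max (f : nat -> nat) :
  (forall i, (1 <= i)%nat -> f i = (B - 1)%nat) -> is_expansion B f 1.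
Proof.
  intro Hmax. replace 1 with (prefix_value B f 0 + / INR B ^ 0) by (cbn; field).
  apply is_expansion_eventually_max; [|intros; apply Hmax; lia].
  intros i Hi. rewrite Hmax by exact Hi. lia.
Qed.

Lemma first_digit_bounds (f : nat -> nat) (x : R) :
  is_expansion B f x -> INR (f 1%nat) <= INR B * x <= INR (f 1%nat) + 1.
Proof.
  intro Hx. pose proof (remainder_bounds f x 1 Hx) as Hr.
  rewrite remainder_S, remainder_0 in Hr. lra.
Qed.

Lemma expansion_lt_1 (f : nat -> nat) (x : R) (n : nat) :
  is_expansion B f x -> (f (S n) < B - 1)%nat -> x < 1.
Proof.
  intros Hx Hd. destruct (proj1 (is_expansion_iff f x) Hx) as [Hf _].
  pose proof (remainder_bounds f x (S n) Hx) as Hr.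
  pose proof (prefix_value_le f 0 n Hf ltac:(lia)) as Hp. cbn [prefix_value psum pow] in Hp.
  assert (Hd' : INR (f (S n)) + 1 <= INR B - 1).
  { rewrite <- S_INR. apply le_INR in Hd. rewrite minus_INR in Hd by lia. exact Hd. }
  pose proof (pow_base_pos n). pose proof INR_base_gt_1.
  assert (Eq : / INR B ^ n = INR B * / INR B ^ S n) by (cbn; field; lra).
  assert (Hq := inv_pow_base_pos (S n)).
  rewrite (remainder_split f x (S n)), prefix_value_S. unfold Rdiv.
  assert ((INR (f (S n)) + remainder B f x (S n)) * / INR B ^ S n <= (INR B - 1) * / INR B ^ S n)
    by (apply Rmult_le_compat_r; lra).
  lra.
Qed.

Lemma expansion_pos (f : nat -> nat) (x : R) (n : nat) :
  is_expansion B f x -> f (S n) <> 0%nat -> 0 < x.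
Proof.
  intros Hx Hd. pose proof (is_expansion_iff f x) as [Hiff _]. destruct (Hiff Hx) as [Hf _].
  rewrite (remainder_split f x (S n)), prefix_value_S.
  pose proof (remainder_bounds f x (S n) Hx).
  pose proof (prefix_value_le f 0 n Hf ltac:(lia)).
  assert (1 <= INR (f (S n))) by (apply (le_INR 1); lia).
  pose proof (pow_base_pos (S n)). cbn [prefix_value psum] in *.
  assert (0 < INR (f (S n)) / INR B ^ S n) by (apply Rdiv_lt_0_compat; lra).
  assert (0 <= remainder B f x (S n) / INR B ^ S n)
    by (apply Rmult_le_pos; [lra|]; apply Rlt_le, inv_pow_base_pos).
  lra.
Qed.

Lemma expansion_eq_1 (f : nat -> nat) :
  is_expansion B f 1 -> forall i, (1 <= i)%nat -> f i = (B - 1)%nat.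
Proof.
  intros Hx [|i] Hi; [lia|].
  assert (Hd := proj1 Hx (S i) Hi).
  destruct (Nat.eq_dec (f (S i)) (B - 1)) as [E|Hne]; [exact E|].
  pose proof (expansion_lt_1 f 1 i Hx ltac:(lia)). lra.
Qed.

Lemma expansion_eq_0 (f : nat -> nat) :
  is_expansion B f 0 -> forall i, (1 <= i)%nat -> f i = 0%nat.
Proof.
  intros Hx [|i] Hi; [lia|].
  destruct (Nat.eq_dec (f (S i)) 0) as [E|Hne]; [exact E|].
  pose proof (expansion_pos f 0 i Hx Hne). lra.
Qed.

Lemma expansion_lex (f h : nat -> nat) (x y : R) (n : nat) :
  is_expansion B f x -> is_expansion B h y ->
  (forall i, (1 <= i <= n)%nat -> f i = h i) -> (f (S n) < h (S n))%nat ->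
  x <= y /\
  (x = y -> h (S n) = S (f (S n)) /\ remainder B f x (S n) = 1 /\ remainder B h y (S n) = 0).
Proof.
  intros Hx Hy Hpre Hlt.
  assert (Ex := remainder_split f x (S n)). assert (Ey := remainder_split h y (S n)).
  rewrite prefix_value_S in Ex, Ey. rewrite (prefix_value_ext B f h n Hpre) in Ex.
  pose proof (remainder_bounds f x (S n) Hx). pose proof (remainder_bounds h y (S n) Hy).
  assert (Hd : INR (f (S n)) + 1 <= INR (h (S n))) by (rewrite <- S_INR; apply le_INR; lia).
  pose proof (pow_base_pos (S n)).
  set (p := INR B ^ S n) in *. set (rf := remainder B f x (S n)) in *.
  set (rh := remainder B h y (S n)) in *.
  assert (Hxy : x - y = (INR (f (S n)) + rf - (INR (h (S n)) + rh)) * / p)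
    by (rewrite Ex, Ey; field; lra).
  assert (Hp : 0 < / p) by (apply Rinv_0_lt_compat; lra).
  split; [nra|]. intro Heq.
  assert (HD : INR (f (S n)) + rf - (INR (h (S n)) + rh) = 0).
  { rewrite Heq, Rminus_diag in Hxy. symmetry in Hxy.
    apply Rmult_integral in Hxy as [|]; lra. }
  split; [|lra]. apply INR_eq. rewrite S_INR. lra.
Qed.

Lemma T_range (y : R) : 0 <= T B y < 1.
Proof. unfold T. pose proof (base_fp (INR B * y)). lra. Qed.

Lemma iter_T_range (x : R) (n : nat) : 0 <= x < 1 -> 0 <= Nat.iter n (T B) x < 1.
Proof. intro Hx. destruct n; [exact Hx|]. apply T_range. Qed.

Lemma T_remainder (f : nat -> nat) (x : R) (n : nat) :
  is_expansion B f x -> remainder B f x (S n) < 1 ->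
  T B (remainder B f x n) = remainder B f x (S n).
Proof.
  intros Hx Hlt. unfold T.
  replace (INR B * remainder B f x n) with (remainder B f x (S n) + INR (f (S n)))
    by (rewrite remainder_S; ring).
  apply frac_part_plus_INR. pose proof (remainder_bounds f x (S n) Hx). lra.
Qed.

Lemma iter_T_remainder (f : nat -> nat) (x : R) :
  is_expansion B f x -> (forall n, remainder B f x n < 1) ->
  forall n, Nat.iter n (T B) x = remainder B f x n.
Proof.
  intros Hx Hlt n. induction n as [|n IH].
  - now rewrite remainder_0.
  - rewrite Nat.iter_succ, IH. now apply T_remainder.
Qed.

Lemma greedy_digit (y : R) : 0 <= y < 1 ->
  (Z.to_nat (Int_part (INR B * y)) < B)%nat /\
  T B y = INR B * y - INR (Z.to_nat (Int_part (INR B * y))).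
Proof.
  intro Hy. pose proof (base_Int_part (INR B * y)) as [H1 H2].
  pose proof INR_base_gt_1.
  set (z := Int_part (INR B * y)) in *.
  assert (Hz0 : (-1 < z)%Z) by (apply lt_IZR; cbn; nra).
  assert (HzB : (z < Z.of_nat B)%Z) by (apply lt_IZR; rewrite <- INR_IZR_INZ; nra).
  assert (E : INR (Z.to_nat z) = IZR z)
    by (rewrite INR_IZR_INZ, Znat.Z2Nat.id; [reflexivity|lia]).
  split; [lia|]. unfold T, frac_part. fold z. now rewrite E.
Qed.

Lemma remainder_greedy (x : R) (n : nat) : 0 <= x < 1 ->
  remainder B (greedy B x) x n = Nat.iter n (T B) x.
Proof.
  intro Hx. induction n as [|n IH].
  - apply remainder_0.
  - rewrite remainder_S, IH, Nat.iter_succ.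
    symmetry. apply greedy_digit, iter_T_range, Hx.
Qed.

Lemma is_expansion_greedy (x : R) : 0 <= x < 1 -> is_expansion B (greedy B x) x.
Proof.
  intro Hx. apply is_expansion_iff. split.
  - intros [|i] Hi; [lia|]. apply greedy_digit, iter_T_range, Hx.
  - intro n. rewrite remainder_greedy by exact Hx. pose proof (iter_T_range x n Hx). lra.
Qed.

Lemma is_expansion_exists_01 (x : R) : 0 <= x <= 1 -> exists f, is_expansion B f x.
Proof.
  intro Hx. destruct (Rle_lt_or_eq_dec x 1 (proj2 Hx)) as [Hlt| ->].
  - exists (greedy B x). apply is_expansion_greedy. lra.
  - exists (fun _ => (B - 1)%nat). now apply is_expansion_all_max.
Qed.

Lemma T_adic (m j : nat) : T B (INR m / INR B ^ S j) = INR (m mod B ^ j) / INR B ^ j.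
Proof.
  assert (Hp : INR (B ^ j) = INR B ^ j) by apply pow_INR.
  pose proof (pow_base_pos j). pose proof INR_base_gt_1.
  assert (Hb : (B ^ j <> 0)%nat) by (apply Nat.pow_nonzero; lia).
  unfold T. rewrite (Nat.div_mod_eq m (B ^ j)) at 1.
  replace (INR B * (INR (B ^ j * (m / B ^ j) + m mod B ^ j) / INR B ^ S j))
    with (INR (m mod B ^ j) / INR B ^ j + INR (m / B ^ j))
    by (rewrite plus_INR, mult_INR, Hp; cbn; field; lra).
  apply frac_part_plus_INR. rewrite <- Hp. split.
  - apply Rmult_le_pos; [apply pos_INR|]. rewrite Hp. apply Rlt_le, Rinv_0_lt_compat; lra.
  - apply (Rmult_lt_reg_r (INR (B ^ j))); [lra|]. unfold Rdiv.
    rewrite Rmult_assoc, Rinv_l, Rmult_1_l, Rmult_1_r by lra.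
    apply lt_INR, Nat.mod_upper_bound, Hb.
Qed.

Lemma orbit_adic_first_level (j m : nat) : (0 < m < B ^ j)%nat ->
  exists n d, (0 < d < B)%nat /\ Nat.iter n (T B) (INR m / INR B ^ j) = INR d / INR B.
Proof.
  revert m. induction j as [|j IH]; intros m Hm; [cbn in Hm; lia|].
  assert (Hb : (B ^ j <> 0)%nat) by (apply Nat.pow_nonzero; lia).
  destruct (Nat.eq_dec (m mod B ^ j) 0) as [Hz|Hnz].
  - exists 0%nat, (m / B ^ j)%nat.
    assert (Hm' : m = (B ^ j * (m / B ^ j))%nat)
      by (rewrite (Nat.div_mod_eq m (B ^ j)) at 1; lia).
    split.
    + cbn in Hm. nia.
    + cbn [Nat.iter]. rewrite Hm' at 1. rewrite mult_INR, pow_INR.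
      pose proof (pow_base_pos j). pose proof INR_base_gt_1. cbn. field. lra.
  - destruct (IH (m mod B ^ j)%nat) as [n [d [Hd Hn]]].
    { split; [lia|]. apply Nat.mod_upper_bound, Hb. }
    exists (S n), d. split; [exact Hd|]. now rewrite Nat.iter_succ_r, T_adic.
Qed.

Lemma Wset_iter (c e y : R) (n : nat) : Wset B c e y -> Wset B c e (Nat.iter n (T B) y).
Proof.
  intros [Hy HW]. split; [now apply iter_T_range|].
  intro m. rewrite <- Nat.iter_add. apply HW.
Qed.

Lemma Wset_not_adic (c e z : R) : c < 1 / INR B -> (INR B - 1) / INR B < e ->
  0 < z < 1 -> adic B z -> ~ Wset B c e z.
Proof.
  intros Hc He Hz [m [j ->]] [_ HW].
  pose proof (pow_base_pos j). pose proof INR_base_gt_1.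
  assert (Hm : (0 < m < B ^ j)%nat).
  { destruct Hz as [Hz0 Hz1]. split.
    - apply INR_lt. cbn. apply (Rmult_lt_reg_r (/ INR B ^ j)); [apply inv_pow_base_pos|]. lra.
    - apply INR_lt. rewrite pow_INR.
      apply (Rmult_lt_reg_r (/ INR B ^ j)); [apply inv_pow_base_pos|].
      rewrite Rinv_r by lra. exact Hz1. }
  destruct (orbit_adic_first_level j m Hm) as [n [d [Hd Hn]]].
  apply (HW n). rewrite Hn.
  assert (1 <= INR d <= INR B - 1) by (split; [apply (le_INR 1)|apply digit_le]; lia).
  unfold Rdiv in *. assert (0 < / INR B) by (apply Rinv_0_lt_compat; lra). split; nra.
Qed.

End Expansions.

(* The binary digits of g_k x, read off a base-k expansion c of x: digits before the
   first non-extreme one are sent 0 -> 0 and k-1 -> 1, the first non-extreme digit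
   becomes 1 and all later ones 0 (see g_val_iff). *)
Definition g_digit (k : nat) (c : nat -> nat) (i : nat) : nat :=
  if excluded_middle_informative
       ((forall j, (1 <= j < i)%nat -> extreme_digit k (c j)) /\ c i <> 0%nat)
  then 1 else 0.

Section GMap.

Variable k : nat.
Hypothesis Hk : (2 <= k)%nat.

Lemma g_digit_digits (c : nat -> nat) : digits 2 (g_digit k c).
Proof. intros i _. unfold g_digit. destruct (excluded_middle_informative _); lia. Qed.

Lemma g_digit_0 (c : nat -> nat) (i : nat) : c i = 0%nat -> g_digit k c i = 0%nat.
Proof. intro Hc. unfold g_digit. destruct (excluded_middle_informative _) as [[_ H]|]; tauto. Qed.

Lemma g_digit_1 (c : nat -> nat) (i : nat) :
  (forall j, (1 <= j < i)%nat -> extreme_digit k (c j)) -> c i <> 0%nat -> g_digit k c i = 1%nat.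
Proof. intros Hpre Hc. unfold g_digit. destruct (excluded_middle_informative _); tauto. Qed.

Lemma g_digit_after (c : nat -> nat) (j i : nat) :
  (1 <= j < i)%nat -> ~ extreme_digit k (c j) -> g_digit k c i = 0%nat.
Proof.
  intros Hji Hne. unfold g_digit.
  destruct (excluded_middle_informative _) as [[Hpre _]|]; [|reflexivity].
  exfalso. exact (Hne (Hpre j Hji)).
Qed.

Lemma g_digit_eq_1 (c : nat -> nat) (i : nat) : g_digit k c i = 1%nat ->
  (forall j, (1 <= j < i)%nat -> extreme_digit k (c j)) /\ c i <> 0%nat.
Proof. unfold g_digit. destruct (excluded_middle_informative _); [tauto|discriminate]. Qed.

Lemma g_digit_ext (c1 c2 : nat -> nat) (i : nat) :
  (forall j, (1 <= j < i)%nat -> c1 j = c2 j) -> (c1 i = 0%nat <-> c2 i = 0%nat) ->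
  g_digit k c1 i = g_digit k c2 i.
Proof.
  intros Hpre Hi. unfold g_digit.
  destruct (excluded_middle_informative _) as [[H1 H2]|H];
    destruct (excluded_middle_informative _) as [[H1' H2']|H']; try reflexivity; exfalso.
  - apply H'. split; [|tauto]. intros j Hj. rewrite <- Hpre by exact Hj. now apply H1.
  - apply H. split; [|tauto]. intros j Hj. rewrite Hpre by exact Hj. now apply H1'.
Qed.

Lemma g_digit_shift (c : nat -> nat) (n i : nat) :
  (forall j, (1 <= j <= n)%nat -> extreme_digit k (c j)) ->
  g_digit k (shift c n) i = g_digit k c (i + n).
Proof.
  intro Hpre. unfold g_digit, shift.
  destruct (excluded_middle_informative _) as [[H1 H2]|H];
    destruct (excluded_middle_informative _) as [[H1' H2']|H']; try reflexivity; exfalso.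
  - apply H'. split; [|exact H2]. intros j Hj.
    destruct (Nat.le_gt_cases j n); [apply Hpre; lia|].
    replace j with ((j - n) + n)%nat by lia. apply H1. lia.
  - apply H. split; [|exact H2']. intros j Hj. apply H1'. lia.
Qed.

Lemma g_val_term (c : nat -> nat) (n : nat) :
  (forall j, (1 <= j <= n)%nat -> extreme_digit k (c j)) -> (1 <= n)%nat ->
  INR (c n) / (INR (k - 1) * 2 ^ n) = INR (g_digit k c n) / INR 2 ^ n.
Proof.
  intros Hpre Hn. replace (INR 2) with 2 by (cbn; ring).
  assert (Hk1 : 0 < INR (k - 1)) by (apply lt_0_INR; lia).
  pose proof (pow_lt 2 n ltac:(lra)).
  destruct (Hpre n ltac:(lia)) as [Hc|Hc].
  - rewrite g_digit_0, Hc by exact Hc. cbn. unfold Rdiv. ring.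
  - rewrite g_digit_1, Hc; [cbn; field; lra| |lia].
    intros j Hj. apply Hpre. lia.
Qed.

Lemma psum_g_val (c : nat -> nat) (n : nat) :
  (forall j, (1 <= j <= n)%nat -> extreme_digit k (c j)) ->
  psum (fun i => INR (c i) / (INR (k - 1) * 2 ^ i)) n = prefix_value 2 (g_digit k c) n.
Proof.
  induction n as [|n IH]; intro Hpre; [reflexivity|].
  cbn [psum]. rewrite prefix_value_S, IH by (intros; apply Hpre; lia).
  rewrite g_val_term; [reflexivity | intros; apply Hpre; lia | lia].
Qed.

Lemma g_val_iff (c : nat -> nat) (w : R) : g_val k c w <-> is_expansion 2 (g_digit k c) w.
Proof.
  destruct (classic (forall i, (1 <= i)%nat -> extreme_digit k (c i))) as [Hall|Hnot].
  - assert (Hsum : forall n,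
        sum_f_R0 (fun i => INR (c (S i)) / (INR (k - 1) * 2 ^ S i)) n =
        sum_f_R0 (fun i => INR (g_digit k c (S i)) / INR 2 ^ S i) n).
    { intro n. apply sum_eq. intros i _. apply g_val_term; [intros; apply Hall|]; lia. }
    split.
    + intros [[N [HN [Hne _]]] | [_ Hs]]; [exfalso; exact (Hne (Hall N HN))|].
      split; [apply g_digit_digits|]. exact (Un_cv_ext _ _ Hsum _ Hs).
    + intros [_ Hs]. right. split; [exact Hall|].
      exact (Un_cv_ext _ _ (fun n => eq_sym (Hsum n)) _ Hs).
  - destruct (first_failure _ Hnot) as [n [Hpre Hne]].
    set (v := prefix_value 2 (g_digit k c) (S n)).
    assert (Hv : is_expansion 2 (g_digit k c) v).
    { apply is_expansion_eventually_zero; [lia|apply g_digit_digits|].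
      intros i Hi. apply (g_digit_after c (S n)); [lia|exact Hne]. }
    assert (Ev : v = psum (fun i => INR (c i) / (INR (k - 1) * 2 ^ i)) (S n - 1) + / 2 ^ S n).
    { unfold v. rewrite prefix_value_S, g_digit_1, psum_g_val, Nat.sub_1_r.
      2: intros; apply Hpre; lia.
      2: intros; apply Hpre; lia.
      2: intro Hc; apply Hne; left; exact Hc.
      replace (INR 2) with 2 by (cbn; ring). cbn [INR Nat.pred]. unfold Rdiv. ring. }
    transitivity (w = v).
    + split.
      * intros [[N [HN [HneN [HpreN ->]]]] | [Hall _]]; [|exfalso; apply Hne, Hall; lia].
        replace N with (S n); [exact (eq_sym Ev)|].
        destruct (Nat.lt_total N (S n)) as [Hlt|[Heq|Hgt]]; [|lia|].
        -- exfalso. apply HneN, Hpre. lia.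
        -- exfalso. apply Hne, HpreN. lia.
      * intros ->. left. exists (S n). repeat split; [lia|exact Hne| |exact Ev].
        intros j Hj. apply Hpre. lia.
    + split; [intros ->; exact Hv|]. intro Hw. exact (is_expansion_unique 2 _ _ _ Hw Hv).
Qed.

Lemma g_spec (x : R) : 0 <= x <= 1 ->
  exists c, is_expansion k c x /\ is_expansion 2 (g_digit k c) (g k x).
Proof.
  intro Hx. unfold g.
  destruct (epsilon_spec (inhabits 0) (fun y => exists c, is_expansion k c x /\ g_val k c y))
    as [c [Hc Hg]].
  - destruct (is_expansion_exists_01 k Hk x Hx) as [c Hc].
    destruct (is_expansion_exists 2 ltac:(lia) (g_digit k c) (g_digit_digits c)) as [w Hw].
    exists w, c. split; [exact Hc|]. now apply g_val_iff.
  - exists c. split; [exact Hc|]. now apply g_val_iff.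
Qed.

Lemma g_value_stops (c : nat -> nat) (w : R) (j n : nat) :
  is_expansion 2 (g_digit k c) w -> (1 <= j <= n)%nat -> ~ extreme_digit k (c j) ->
  w = prefix_value 2 (g_digit k c) n.
Proof.
  intros Hw Hj Hne. apply (is_expansion_unique 2 (g_digit k c) _ _ Hw).
  apply is_expansion_eventually_zero; [lia|apply g_digit_digits|].
  intros i Hi. apply (g_digit_after c j); [lia|exact Hne].
Qed.

Lemma g_digit_prefix (c1 c2 : nat -> nat) (n : nat) :
  (forall i, (1 <= i <= n)%nat -> c1 i = c2 i) ->
  forall i, (1 <= i <= n)%nat -> g_digit k c1 i = g_digit k c2 i.
Proof.
  intros Hpre i Hi. apply g_digit_ext; [intros; apply Hpre; lia|]. rewrite Hpre by lia. tauto.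
Qed.

Lemma g_digit_lex (c1 c2 : nat -> nat) (w1 w2 : R) (n : nat) :
  is_expansion 2 (g_digit k c1) w1 -> is_expansion 2 (g_digit k c2) w2 ->
  (forall i, (1 <= i <= n)%nat -> c1 i = c2 i) ->
  (c1 (S n) < c2 (S n))%nat -> (c2 (S n) < k)%nat ->
  w1 <= w2 /\ (w1 = w2 -> adic 2 w1).
Proof.
  intros Hw1 Hw2 Hpre Hlt Hc2.
  pose proof (g_digit_prefix c1 c2 n Hpre) as Hgpre.
  destruct (classic (forall j, (1 <= j <= n)%nat -> extreme_digit k (c1 j))) as [Hext|Hnext].
  - assert (Hg2 : g_digit k c2 (S n) = 1%nat).
    { apply g_digit_1; [|lia]. intros j Hj. rewrite <- Hpre by lia. apply Hext. lia. }
    destruct (Nat.eq_dec (c1 (S n)) 0) as [Hz|Hnz].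
    + destruct (expansion_lex 2 ltac:(lia) _ _ w1 w2 n Hw1 Hw2 Hgpre) as [Hle Htie].
      { rewrite g_digit_0, Hg2 by exact Hz. lia. }
      split; [exact Hle|]. intro E. destruct (Htie E) as [_ [_ Hr2]].
      destruct (prefix_value_adic 2 ltac:(lia) (g_digit k c2) (S n)) as [m Hm].
      exists m, (S n). rewrite E, (remainder_split 2 ltac:(lia) (g_digit k c2) w2 (S n)), Hr2, Hm.
      unfold Rdiv. ring.
    + assert (Hne : ~ extreme_digit k (c1 (S n))) by (intros [H|H]; lia).
      assert (E1 := g_value_stops c1 w1 (S n) (S n) Hw1 ltac:(lia) Hne).
      assert (Ep : prefix_value 2 (g_digit k c1) (S n) = prefix_value 2 (g_digit k c2) (S n)).
      { rewrite !prefix_value_S, (prefix_value_ext 2 _ _ n Hgpre), Hg2, g_digit_1;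
          [reflexivity| |exact Hnz]. intros j Hj. apply Hext. lia. }
      destruct (prefix_value_adic 2 ltac:(lia) (g_digit k c1) (S n)) as [m Hm].
      split; [|intros _; exists m, (S n); rewrite E1; exact Hm].
      rewrite E1, Ep, (remainder_split 2 ltac:(lia) (g_digit k c2) w2 (S n)).
      pose proof (remainder_bounds 2 ltac:(lia) _ _ (S n) Hw2).
      pose proof (inv_pow_base_pos 2 ltac:(lia) (S n)). unfold Rdiv. nra.
  - apply not_all_ex_not in Hnext as [j Hj]. apply imply_to_and in Hj as [Hj Hne].
    assert (E1 := g_value_stops c1 w1 j n Hw1 Hj Hne).
    assert (E2 : w2 = prefix_value 2 (g_digit k c2) n)
      by (apply (g_value_stops c2 w2 j n Hw2 Hj); rewrite <- Hpre by exact Hj; exact Hne).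
    rewrite (prefix_value_ext 2 _ _ n Hgpre) in E1.
    destruct (prefix_value_adic 2 ltac:(lia) (g_digit k c2) n) as [m Hm].
    split; [lra|]. intros _. exists m, n. rewrite E1. exact Hm.
Qed.

(* c1 and c2 are the two base-k expansions ... (m+1) 0 0 ... and ... m (k-1) (k-1) ...
   of one k-adic rational. *)
Lemma g_digit_tie (c1 c2 : nat -> nat) (w1 w2 : R) (n : nat) :
  is_expansion 2 (g_digit k c1) w1 -> is_expansion 2 (g_digit k c2) w2 ->
  (forall i, (1 <= i <= n)%nat -> c1 i = c2 i) -> c1 (S n) = S (c2 (S n)) ->
  (forall i, (S n < i)%nat -> c1 i = 0%nat) ->
  (forall i, (S n < i)%nat -> c2 i = (k - 1)%nat) ->
  w1 <= w2.
Proof.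
  intros Hw1 Hw2 Hpre Hc Hz1 Hmax2.
  pose proof (g_digit_prefix c1 c2 n Hpre) as Hgpre.
  destruct (classic (forall j, (1 <= j <= n)%nat -> extreme_digit k (c1 j))) as [Hext|Hnext].
  - assert (Hext2 : forall j, (1 <= j <= n)%nat -> extreme_digit k (c2 j))
      by (intros j Hj; rewrite <- Hpre by exact Hj; now apply Hext).
    assert (Hg1 : g_digit k c1 (S n) = 1%nat)
      by (apply g_digit_1; [intros j Hj; apply Hext; lia|lia]).
    assert (E1 : w1 = prefix_value 2 (g_digit k c1) (S n)).
    { apply (is_expansion_unique 2 (g_digit k c1) _ _ Hw1).
      apply is_expansion_eventually_zero; [lia|apply g_digit_digits|].
      intros i Hi. apply g_digit_0, Hz1, Hi. }
    rewrite E1, prefix_value_S, Hg1, (prefix_value_ext 2 _ _ n Hgpre).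
    destruct (Nat.eq_dec (c2 (S n)) 0) as [Hz|Hnz].
    + assert (E2 : w2 = prefix_value 2 (g_digit k c2) (S n) + / INR 2 ^ S n).
      { apply (is_expansion_unique 2 (g_digit k c2) _ _ Hw2).
        apply is_expansion_eventually_max; [lia|apply g_digit_digits|].
        intros i Hi. apply g_digit_1; [|rewrite Hmax2; lia].
        intros j Hj. destruct (Nat.lt_total j (S n)) as [Hlt|[Heq|Hgt]].
        - apply Hext2. lia.
        - left. now subst j.
        - right. apply Hmax2, Hgt. }
      rewrite E2, prefix_value_S, g_digit_0 by exact Hz. cbn [INR]. lra.
    + assert (Hg2 : g_digit k c2 (S n) = 1%nat)
        by (apply g_digit_1; [intros j Hj; apply Hext2; lia|exact Hnz]).
      rewrite (remainder_split 2 ltac:(lia) (g_digit k c2) w2 (S n)), prefix_value_S, Hg2.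
      pose proof (remainder_bounds 2 ltac:(lia) _ _ (S n) Hw2).
      pose proof (inv_pow_base_pos 2 ltac:(lia) (S n)). unfold Rdiv. nra.
  - apply not_all_ex_not in Hnext as [j Hj]. apply imply_to_and in Hj as [Hj Hne].
    rewrite (g_value_stops c1 w1 j n Hw1 Hj Hne), (prefix_value_ext 2 _ _ n Hgpre).
    rewrite (g_value_stops c2 w2 j n Hw2 Hj) by (rewrite <- Hpre by exact Hj; exact Hne).
    lra.
Qed.

(* g_k is constant only on the gaps of C_k, and its value there is dyadic. *)
Lemma g_value_mono (c1 c2 : nat -> nat) (x1 x2 w1 w2 : R) :
  is_expansion k c1 x1 -> is_expansion k c2 x2 ->
  is_expansion 2 (g_digit k c1) w1 -> is_expansion 2 (g_digit k c2) w2 ->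
  x1 <= x2 -> w1 <= w2 /\ (x1 < x2 -> w1 = w2 -> adic 2 w1).
Proof.
  intros Hx1 Hx2 Hw1 Hw2 Hle.
  destruct (classic (forall i, (1 <= i)%nat -> c1 i = c2 i)) as [Hsame|Hdiff].
  - assert (x1 = x2).
    { apply (is_expansion_unique k c2); [|exact Hx2].
      exact (is_expansion_ext k Hk _ _ _ Hsame Hx1). }
    assert (w1 = w2).
    { apply (is_expansion_unique 2 (g_digit k c2)); [|exact Hw2].
      apply (is_expansion_ext 2 ltac:(lia) (g_digit k c1)); [|exact Hw1].
      intros i Hi. apply (g_digit_prefix c1 c2 i); [intros; apply Hsame|]; lia. }
    split; intros; lra.
  - destruct (first_failure _ Hdiff) as [n [Hpre Hne]].
    destruct (proj1 (Nat.lt_gt_cases (c1 (S n)) (c2 (S n))) Hne) as [Hlt|Hgt].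
    + destruct (g_digit_lex c1 c2 w1 w2 n Hw1 Hw2 Hpre Hlt (proj1 Hx2 (S n) ltac:(lia)))
        as [Hw Hadic].
      split; [exact Hw|intros _; exact Hadic].
    + destruct (expansion_lex k Hk c2 c1 x2 x1 n Hx2 Hx1 (fun i Hi => eq_sym (Hpre i Hi)) Hgt)
        as [Hge Htie].
      destruct (Htie ltac:(lra)) as [Hc [Hr2 Hr1]].
      split; [|intros; lra].
      apply (g_digit_tie c1 c2 w1 w2 n Hw1 Hw2 Hpre Hc); intros i Hi;
        replace i with ((i - S n) + S n)%nat by lia.
      * apply (expansion_eq_0 k Hk (shift c1 (S n))); [|lia].
        rewrite <- Hr1. now apply is_expansion_shift.
      * apply (expansion_eq_1 k Hk (shift c2 (S n))); [|lia].
        rewrite <- Hr2. now apply is_expansion_shift.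
Qed.

Lemma g_of_expansion (c : nat -> nat) (x : R) :
  is_expansion k c x -> is_expansion 2 (g_digit k c) (g k x).
Proof.
  intro Hx. destruct (g_spec x (is_expansion_range k Hk c x Hx)) as [c' [Hx' Hg']].
  destruct (is_expansion_exists 2 ltac:(lia) (g_digit k c) (g_digit_digits c)) as [w Hw].
  replace (g k x) with w; [exact Hw|].
  apply Rle_antisym.
  - exact (proj1 (g_value_mono c c' x x _ _ Hx Hx' Hw Hg' (Rle_refl x))).
  - exact (proj1 (g_value_mono c' c x x _ _ Hx' Hx Hg' Hw (Rle_refl x))).
Qed.

Lemma g_mono (x y : R) : 0 <= x -> x <= y -> y <= 1 ->
  g k x <= g k y /\ (x < y -> g k x = g k y -> adic 2 (g k x)).
Proof.
  intros H0x Hxy Hy1.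
  destruct (g_spec x ltac:(lra)) as [cx [Hx Hgx]].
  destruct (g_spec y ltac:(lra)) as [cy [Hy Hgy]].
  exact (g_value_mono cx cy x y _ _ Hx Hy Hgx Hgy Hxy).
Qed.

Lemma g_range (x : R) : 0 <= x <= 1 -> 0 <= g k x <= 1.
Proof.
  intro Hx. destruct (g_spec x Hx) as [c [_ Hg]].
  exact (is_expansion_range 2 ltac:(lia) _ _ Hg).
Qed.

Lemma g_1 : g k 1 = 1.
Proof.
  set (c := fun _ : nat => (k - 1)%nat).
  apply (is_expansion_unique 2 (g_digit k c)).
  - apply g_of_expansion, is_expansion_all_max; [exact Hk|reflexivity].
  - apply is_expansion_all_max; [lia|]. intros i Hi.
    apply g_digit_1; [intros j _; right; reflexivity|unfold c; lia].
Qed.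

Lemma g_lt_1 (x : R) : 0 <= x < 1 -> g k x < 1.
Proof.
  intro Hx. destruct (g_spec x ltac:(lra)) as [c [Hc Hg]].
  destruct (is_expansion_range 2 ltac:(lia) _ _ Hg) as [_ [Hlt|Heq]]; [exact Hlt|exfalso].
  rewrite Heq in Hg.
  assert (Hmax : forall i, (1 <= i)%nat -> c i = (k - 1)%nat).
  { intros i Hi.
    destruct (g_digit_eq_1 c (S i) (expansion_eq_1 2 ltac:(lia) _ Hg (S i) ltac:(lia)))
      as [Hpre _].
    destruct (g_digit_eq_1 c i (expansion_eq_1 2 ltac:(lia) _ Hg i Hi)) as [_ Hnz].
    destruct (Hpre i ltac:(lia)); [contradiction|assumption]. }
  assert (x = 1); [|lra].
  exact (is_expansion_unique k c _ _ Hc (is_expansion_all_max k Hk c Hmax)).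
Qed.

Lemma g_pos (x : R) : 0 < x <= 1 -> 0 < g k x.
Proof.
  intro Hx. destruct (g_spec x ltac:(lra)) as [c [Hc Hg]].
  destruct (is_expansion_range 2 ltac:(lia) _ _ Hg) as [[Hlt|Heq] _]; [exact Hlt|exfalso].
  rewrite <- Heq in Hg.
  assert (Hzero : forall n i, (1 <= i <= n)%nat -> c i = 0%nat).
  { induction n as [|n IH]; intros i Hi; [lia|].
    destruct (Nat.eq_dec i (S n)) as [->|]; [|apply IH; lia].
    destruct (Nat.eq_dec (c (S n)) 0) as [Hz|Hnz]; [exact Hz|].
    assert (Hg1 : g_digit k c (S n) = 1%nat)
      by (apply g_digit_1; [intros j Hj; left; apply IH; lia|exact Hnz]).
    rewrite (expansion_eq_0 2 ltac:(lia) _ Hg (S n) ltac:(lia)) in Hg1. discriminate. }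
  assert (x = 0); [|lra].
  apply (is_expansion_unique k c _ _ Hc).
  apply (is_expansion_eventually_zero k Hk c 0 (proj1 Hc)).
  intros i Hi. apply (Hzero i). lia.
Qed.

Lemma g_remainder (c : nat -> nat) (x : R) (n : nat) :
  is_expansion k c x -> (forall j, (1 <= j <= n)%nat -> extreme_digit k (c j)) ->
  remainder 2 (g_digit k c) (g k x) n = g k (remainder k c x n).
Proof.
  intros Hx Hpre. apply (is_expansion_unique 2 (g_digit k (shift c n))).
  - apply (is_expansion_ext 2 ltac:(lia) (shift (g_digit k c) n)).
    + intros i _. unfold shift at 1. symmetry. now apply g_digit_shift.
    + apply is_expansion_shift; [lia|]. now apply g_of_expansion.
  - apply g_of_expansion, is_expansion_shift; assumption.
Qed.

Lemma g_first_digit (c : nat -> nat) (x : R) :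
  is_expansion k c x -> extreme_digit k (c 1%nat) ->
  2 * g k x = INR (g_digit k c 1) + g k (INR k * x - INR (c 1%nat)).
Proof.
  intros Hx Hc1.
  assert (E : remainder 2 (g_digit k c) (g k x) 1 = g k (remainder k c x 1)).
  { apply g_remainder; [exact Hx|]. intros j Hj. now replace j with 1%nat by lia. }
  rewrite (remainder_S 2 ltac:(lia)), (remainder_S k Hk), !remainder_0 in E.
  cbn [INR] in E. lra.
Qed.

Lemma g_lt_half (a : R) : 0 <= a -> INR k * a < 1 -> g k a < 1 / 2.
Proof.
  intros H0a Hka. assert (Hk2 : 2 <= INR k) by (apply (le_INR 2) in Hk; cbn in Hk; lra).
  destruct (is_expansion_exists_01 k Hk a ltac:(nra)) as [c Hc].
  pose proof (first_digit_bounds k Hk c a Hc) as Hd.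
  assert (Hc1 : c 1%nat = 0%nat).
  { destruct (Nat.eq_dec (c 1%nat) 0) as [|Hnz]; [assumption|].
    assert (1 <= INR (c 1%nat)) by (apply (le_INR 1); lia). lra. }
  pose proof (g_first_digit c a Hc (or_introl Hc1)) as E.
  rewrite g_digit_0, Hc1 in E by exact Hc1. rewrite Hc1 in Hd. cbn [INR] in E, Hd.
  pose proof (g_lt_1 (INR k * a - 0) ltac:(lra)). lra.
Qed.

Lemma g_gt_half (b : R) : INR k - 1 < INR k * b -> b <= 1 -> 1 / 2 < g k b.
Proof.
  intros Hkb Hb1. assert (Hk2 : 2 <= INR k) by (apply (le_INR 2) in Hk; cbn in Hk; lra).
  destruct (is_expansion_exists_01 k Hk b ltac:(nra)) as [c Hc].
  pose proof (first_digit_bounds k Hk c b Hc) as Hd.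
  assert (Hc1 : c 1%nat = (k - 1)%nat).
  { assert (Hlt := proj1 Hc 1%nat ltac:(lia)).
    destruct (Nat.eq_dec (c 1%nat) (k - 1)) as [|Hne]; [assumption|].
    assert (INR (c 1%nat) + 2 <= INR k)
      by (replace 2 with (INR 2) by (cbn; ring); rewrite <- plus_INR; apply le_INR; lia).
    lra. }
  pose proof (g_first_digit c b Hc (or_intror Hc1)) as E.
  rewrite g_digit_1, Hc1, minus_INR in E by (lia || intros; lia).
  rewrite Hc1, minus_INR in Hd by lia. cbn [INR] in E, Hd.
  pose proof (g_pos (INR k * b - (INR k - 1)) ltac:(lra)). lra.
Qed.

Lemma g_iter (c : nat -> nat) (x : R) :
  is_expansion k c x -> (forall i, (1 <= i)%nat -> extreme_digit k (c i)) ->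
  (forall n, remainder k c x n < 1) ->
  forall n, Nat.iter n (T 2) (g k x) = g k (Nat.iter n (T k) x).
Proof.
  intros Hx Hext Hlt n.
  assert (Hg := g_of_expansion c x Hx).
  assert (Hrem : forall n, remainder 2 (g_digit k c) (g k x) n = g k (remainder k c x n))
    by (intro m; apply g_remainder; [exact Hx|intros; apply Hext; lia]).
  rewrite (iter_T_remainder k Hk c x Hx Hlt), (iter_T_remainder 2 ltac:(lia) _ _ Hg), Hrem.
  - reflexivity.
  - intro m. rewrite Hrem. apply g_lt_1. pose proof (remainder_bounds k Hk c x m Hx).
    specialize (Hlt m). lra.
Qed.

Lemma g_adic_of_nonextreme (c : nat -> nat) (x : R) (j : nat) :
  is_expansion k c x -> (1 <= j)%nat -> ~ extreme_digit k (c j) -> adic 2 (g k x).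
Proof.
  intros Hx Hj Hne.
  destruct (prefix_value_adic 2 ltac:(lia) (g_digit k c) j) as [m Hm].
  exists m, j. rewrite <- Hm.
  exact (g_value_stops c _ j j (g_of_expansion c x Hx) ltac:(lia) Hne).
Qed.
End GMap.

Section CantorSets.

Variables (k : nat) (a b : R).
Hypothesis Hk : (2 <= k)%nat.
Hypothesis Ha : 0 <= a < 1 / INR k.
Hypothesis Hb : (INR k - 1) / INR k < b <= 1.

Lemma gap_scaled : INR k * a < 1 /\ INR k - 1 < INR k * b.
Proof.
  assert (0 < INR k) by (apply lt_0_INR; lia).
  split.
  - replace 1 with (INR k * (1 / INR k)) by (field; lra). apply Rmult_lt_compat_l; lra.
  - replace (INR k - 1) with (INR k * ((INR k - 1) / INR k)) by (field; lra).
    apply Rmult_lt_compat_l; lra.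
Qed.

Lemma gap_bounds : 0 <= a < 1 / 2 /\ 1 / 2 < b <= 1 /\ g k a < 1 / 2 < g k b.
Proof.
  destruct gap_scaled as [Hka Hkb].
  assert (Hk2 : 2 <= INR k) by (apply (le_INR 2) in Hk; cbn in Hk; lra).
  split; [|split; [|split]]; try nra.
  - apply (g_lt_half k Hk); [apply Ha|exact Hka].
  - apply (g_gt_half k Hk); [exact Hkb|apply Hb].
Qed.

Lemma Wset2_not_adic (z : R) : 0 < z < 1 -> adic 2 z -> ~ Wset 2 (g k a) (g k b) z.
Proof.
  destruct gap_bounds as [_ [_ Hg]].
  apply Wset_not_adic; [lia| |]; replace (INR 2) with 2 by (cbn; ring); lra.
Qed.

Lemma greedy_extreme_of_Wset (x : R) :
  Wset k a b x -> forall i, (1 <= i)%nat -> extreme_digit k (greedy k x i).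
Proof.
  intros [Hx HW] [|m] Hm; [lia|]. cbn [greedy].
  pose proof (iter_T_range k x m Hx) as Hy. specialize (HW m).
  set (y := Nat.iter m (T k) x) in *.
  destruct gap_scaled as [Hka Hkb].
  assert (0 < INR k) by (apply lt_0_INR; lia).
  destruct (Rle_or_lt y a) as [Hya|Hay].
  - left. rewrite <- (Int_part_spec (INR k * y) 0); [reflexivity|]. cbn. split; nra.
  - assert (Hby : b <= y) by (apply Rnot_lt_le; intro; apply HW; lra).
    right. rewrite <- (Int_part_spec (INR k * y) (Z.of_nat (k - 1))).
    + apply Znat.Nat2Z.id.
    + rewrite <- INR_IZR_INZ, minus_INR by lia. cbn [INR]. split; nra.
Qed.

Lemma Wset_subset_Cset (x : R) : Wset k a b x -> Cset k x.
Proof.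
  intro Hw. pose proof Hw as [Hx _]. split; [lra|].
  exists (greedy k x). split.
  - now apply is_expansion_greedy.
  - now apply greedy_extreme_of_Wset.
Qed.

Lemma g_Wset_of_Wset (x : R) : Wset k a b x -> Wset 2 (g k a) (g k b) (g k x).
Proof.
  intro Hw. pose proof Hw as [Hx HW]. destruct gap_bounds as [Ha' [Hb' _]].
  assert (Hd := is_expansion_greedy k Hk x Hx).
  assert (Hiter : forall n, Nat.iter n (T 2) (g k x) = g k (Nat.iter n (T k) x)).
  { apply (g_iter k Hk _ x Hd (greedy_extreme_of_Wset x Hw)).
    intro n. rewrite (remainder_greedy k Hk) by exact Hx. now apply iter_T_range. }
  split.
  - pose proof (g_range k Hk x ltac:(lra)). pose proof (g_lt_1 k Hk x Hx). lra.
  - intro n. rewrite Hiter. specialize (HW n).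
    pose proof (iter_T_range k x n Hx) as Hy.
    set (y := Nat.iter n (T k) x) in *.
    destruct (Rle_or_lt y a) as [Hya|Hay].
    + pose proof (proj1 (g_mono k Hk y a ltac:(lra) Hya ltac:(lra))). lra.
    + assert (Hby : b <= y) by (apply Rnot_lt_le; intro; apply HW; lra).
      pose proof (proj1 (g_mono k Hk b y ltac:(lra) Hby ltac:(lra))). lra.
Qed.

Lemma remainder_lt_1_of_g_Wset (d : nat -> nat) (x : R) :
  is_expansion k d x -> (forall i, (1 <= i)%nat -> extreme_digit k (d i)) ->
  Wset 2 (g k a) (g k b) (g k x) -> forall n, remainder k d x n < 1.
Proof.
  intros Hd Hext HW n.
  destruct (remainder_bounds k Hk d x n Hd) as [_ [Hlt|Heq]]; [exact Hlt|exfalso].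
  assert (Hr : remainder 2 (g_digit k d) (g k x) n = 1).
  { rewrite (g_remainder k Hk d x n Hd) by (intros; apply Hext; lia).
    rewrite Heq. apply g_1, Hk. }
  assert (Ex := remainder_split 2 ltac:(lia) (g_digit k d) (g k x) n).
  rewrite Hr in Ex.
  destruct (prefix_value_adic 2 ltac:(lia) (g_digit k d) n) as [m Hm].
  pose proof (prefix_value_le 2 ltac:(lia) (g_digit k d) 0 n (g_digit_digits k Hk d) ltac:(lia)).
  pose proof (inv_pow_base_pos 2 ltac:(lia) n). cbn [prefix_value psum] in *.
  apply (Wset2_not_adic (g k x)); [split; [lra|apply HW]| |exact HW].
  exists (S m), n. rewrite Ex, Hm, (S_INR m). field.
  apply pow_nonzero. cbn. lra.
Qed.

Lemma Wset_of_Cset_g_Wset (x : R) : Cset k x -> Wset 2 (g k a) (g k b) (g k x) -> Wset k a b x.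
Proof.
  intros [Hx [d [Hd Hext]]] HW. destruct gap_bounds as [Ha' [Hb' _]].
  assert (Hlt := remainder_lt_1_of_g_Wset d x Hd Hext HW).
  assert (Hy : forall n, 0 <= Nat.iter n (T k) x < 1).
  { intro n. rewrite (iter_T_remainder k Hk d x Hd Hlt).
    pose proof (remainder_bounds k Hk d x n Hd). specialize (Hlt n). lra. }
  split; [exact (Hy 0%nat)|]. intros n [Hay Hyb].
  pose proof (Hy n) as Hyn. set (y := Nat.iter n (T k) x) in *.
  assert (Hgy : Nat.iter n (T 2) (g k x) = g k y) by (apply (g_iter k Hk d); assumption).
  destruct (g_mono k Hk a y ltac:(lra) ltac:(lra) ltac:(lra)) as [Hga Hadic_a].
  destruct (g_mono k Hk y b ltac:(lra) ltac:(lra) ltac:(lra)) as [Hgb Hadic_b].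
  assert (Hout := proj2 HW n). rewrite Hgy in Hout.
  apply (Wset2_not_adic (g k y)).
  - split; [apply (g_pos k Hk)|apply (g_lt_1 k Hk)]; lra.
  - destruct (Req_dec (g k a) (g k y)) as [E|E].
    + rewrite <- E. exact (Hadic_a Hay E).
    + apply Hadic_b; [exact Hyb|]. apply Rle_antisym; [exact Hgb|].
      apply Rnot_lt_le. intro. apply Hout. lra.
  - rewrite <- Hgy. apply Wset_iter, HW.
Qed.

Lemma not_Bset_of_g_Wset (x : R) :
  0 <= x <= 1 -> Wset 2 (g k a) (g k b) (g k x) -> ~ Bset k x.
Proof.
  intros Hx HW [n [l [Hn [Hl [Hlk Hxl]]]]].
  assert (Hx01 : 0 < x < 1).
  { pose proof (pow_base_pos k Hk n). rewrite Hxl. split.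
    - apply Rdiv_lt_0_compat; [apply lt_0_INR; lia|lra].
    - apply (Rmult_lt_reg_r (INR k ^ n)); [lra|]. unfold Rdiv.
      rewrite Rmult_assoc, Rinv_l, Rmult_1_l, Rmult_1_r by lra.
      rewrite <- pow_INR. apply lt_INR. pose proof (Nat.pow_nonzero k n). lia. }
  destruct (is_expansion_exists_01 k Hk x Hx) as [c Hc].
  destruct (classic (forall i, (1 <= i)%nat -> extreme_digit k (c i))) as [Hext|Hnext].
  - apply (Wset_not_adic k Hk a b x); [apply Ha|apply Hb|exact Hx01|now exists l, n|].
    apply Wset_of_Cset_g_Wset; [split; [exact Hx|now exists c]|exact HW].
  - apply not_all_ex_not in Hnext as [j Hj]. apply imply_to_and in Hj as [Hj Hne].
    apply (Wset2_not_adic (g k x)); [|exact (g_adic_of_nonextreme k Hk c x j Hc Hj Hne)|exact HW].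
    split; [apply (g_pos k Hk); lra|apply HW].
Qed.

End CantorSets.

Theorem mainTheorem7 (k : nat) (a b : R) :
  (3 <= k)%nat ->
  0 <= a < 1 / INR k ->
  (INR k - 1) / INR k < b <= 1 ->
  (* (a) W_k(a,b) ⊆ C_k *)
  (forall x : R, Wset k a b x -> Cset k x) /\
  (* (b) g_k^{-1}(W_2(g_k a, g_k b)) ∩ B_k = ∅ (preimage taken in [0,1]) *)
  (forall x : R, (0 <= x <= 1)%R -> Wset 2 (g k a) (g k b) (g k x) -> ~ Bset k x) /\
  (* (c) W_k(a,b) = C_k ∩ g_k^{-1}(W_2(g_k a, g_k b)) *)
  (forall x : R, Wset k a b x <-> (Cset k x /\ ((0 <= x <= 1)%R /\ Wset 2 (g k a) (g k b) (g k x)))).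
Proof.
  intros Hk Ha Hb. assert (Hk2 : (2 <= k)%nat) by lia.
  split; [|split].
  - exact (Wset_subset_Cset k a b Hk2 Ha Hb).
  - exact (not_Bset_of_g_Wset k a b Hk2 Ha Hb).
  - intro x. split.
    + intro Hw. split; [exact (Wset_subset_Cset k a b Hk2 Ha Hb x Hw)|].
      split; [destruct Hw as [Hx _]; lra|exact (g_Wset_of_Wset k a b Hk2 Ha Hb x Hw)].
    + intros [HC [_ HW]]. exact (Wset_of_Cset_g_Wset k a b Hk2 Ha Hb x HC HW).
Qed.
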